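(* For every integer $T>0$ and real $\lambda>0$: (i) with $r=\sqrt{T+1}\,n$ and $n\ge r^2/\lambda^2$, $\mathsf{VC}\text{-}\mathsf{dim}\big(\mathbb{H}_{r,\lambda}(\mathcal{E}_{\mathsf{WL}}(n,d_T))\big)\in\Theta(r^2/\lambda^2)$; (ii) with $r=\sqrt{T/(T+1)}$ and $n\ge r^2/\lambda^2$, $\mathsf{VC}\text{-}\mathsf{dim}\big(\mathbb{H}_{1,\lambda}(\overline{\mathcal{E}}_{\mathsf{WL}}(n,d_T))\big)\in\Theta(1/\lambda^2)$.
   Context: $\mathcal{G}_n$ is the set of (unlabeled, simple, undirected) graphs on $n$ vertices. $1$-WL colouring: $C^1_0$ constant, $C^1_t(v)=\mathsf{RELABEL}(C^1_{t-1}(v),\{\!\{C^1_{t-1}(u):u\in N(v)\}\!\})$ with a fixed injective $\mathsf{RELABEL}$ shared by all graphs. Let $\Sigma_t$ be the (finite) set of colours occurring at round $t$ over all graphs in $\mathcal{G}_n$; $\phi_t(G)\in\mathbb{R}^{\Sigma_t}$ has entry $\phi_t(G)_c=|\{v:C^1_t(v)=c\}|$, and $\phi^{(T)}_{\mathsf{WL}}(G)=[\phi_0(G),\dots,\phi_T(G)]\in\mathbb{R}^{d_T}$ (concatenation), $\overline{\phi^{(T)}_{\mathsf{WL}}}(G)=\phi^{(T)}_{\mathsf{WL}}(G)/\|\phi^{(T)}_{\mathsf{WL}}(G)\|$ (Euclidean norm). $\mathcal{E}_{\mathsf{WL}}(n,d_T)=\{\phi^{(T)}_{\mathsf{WL}}\}$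 and $\overline{\mathcal{E}}_{\mathsf{WL}}(n,d_T)=\{\overline{\phi^{(T)}_{\mathsf{WL}}}\}$ (as maps $\mathcal{G}_n\to\mathbb{R}^{d_T}$). A labelled sample $(\mathbf{x}_1,y_1),\dots,(\mathbf{x}_s,y_s)\in\mathbb{R}^d\times\{0,1\}$ is $(r,\lambda)$-separable if all $\mathbf{x}_i$ lie in some Euclidean ball of radius $r$ and the Euclidean distance between the convex hulls of $\{\mathbf{x}_i:y_i=0\}$ and $\{\mathbf{x}_i:y_i=1\}$ is at least $2\lambda$. For a class $\mathcal{E}$ of maps $\mathcal{G}_n\to\mathbb{R}^d$, $\mathbb{H}_{r,\lambda}(\mathcal{E})$ is the set of partial concepts $h:\mathcal{G}_n\to\{0,1,\star\}$ such that for all $G_1,\dots,G_s$ in $\mathrm{supp}(h)=\{G:h(G)\ne\star\}$ there is $\mathrm{emb}\in\mathcal{E}$ with $(\mathrm{emb}(G_1),h(G_1)),\dots,(\mathrm{emb}(G_s),h(G_s))$ $(r,\lambda)$-separable. The VC dimension of a partial concept class is the largest $m$ such that some $\{x_1,\dots,x_m\}$ is shattered, i.e. for every $\tau\in\{0,1\}^m$ there is $h$ in the class with $h(x_i)=\tau_i$ for all $i$. *)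

From HB Require Import structures.
From mathcomp Require Import all_boot all_order all_algebra all_fingroup.
From mathcomp Require Import boolp reals.

Set Implicit Arguments.
Unset Strict Implicit.
Unset Printing Implicit Defensive.

Import Order.TTheory GRing.Theory Num.Theory.
Local Open Scope ring_scope.

Definition is_simple n (E : {set 'I_n * 'I_n}) : bool :=
  [forall u, forall v, ((u, v) \in E) == ((v, u) \in E)] &&
  [forall u, (u, u) \notin E].

Definition perm_graph n (s : 'S_n) (E : {set 'I_n * 'I_n}) : {set 'I_n * 'I_n} :=
  [set (s x.1, s x.2) | x in E].

Definition is_canon n (E : {set 'I_n * 'I_n}) : bool :=
  [forall s : 'S_n, (enum_rank E <= enum_rank (perm_graph s E))%N].

(* G_n : unlabelled simple graphs on n vertices, one canonical labelled  *)
(* representative per isomorphism class.                                *)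
Definition ugraph n : finType := {E : {set 'I_n * 'I_n} | is_simple E && is_canon E}.

Definition adj n (G : ugraph n) (u v : 'I_n) : bool := (u, v) \in val G.

(* 1-WL colouring. Colours are natural numbers; c0 is the constant     *)
(* initial colour; rl is the RELABEL function, applied to the previous  *)
(* colour and the multiset of neighbour colours (multisets represented  *)
(* by sorted sequences).                                                *)
Definition relabel_injective (rl : nat -> seq nat -> nat) : Prop :=
  forall a s b t, rl a (sort leq s) = rl b (sort leq t) -> a = b /\ perm_eq s t.

Fixpoint wl (c0 : nat) (rl : nat -> seq nat -> nat) n (G : ugraph n) (t : nat)
    (v : 'I_n) : nat :=
  match t with
  | 0 => c0
  | t'.+1 => rl (wl c0 rl G t' v)
                (sort leq [seq wl c0 rl G t' u | u <- enum 'I_n & adj G v u])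
  end.

Definition Sigma c0 rl n (t : nat) : seq nat :=
  undup (flatten [seq [seq wl c0 rl G t v | v <- enum 'I_n] | G <- enum (ugraph n)]).

(* coordinates of the concatenation [phi_0, ..., phi_T] *)
Definition wl_idx c0 rl n (T : nat) : seq (nat * nat) :=
  flatten [seq [seq (t, c) | c <- Sigma c0 rl n t] | t <- iota 0 T.+1].

Definition dT c0 rl n T : nat := size (wl_idx c0 rl n T).

Definition phiWL (R : realType) c0 rl n T (G : ugraph n) : 'rV[R]_(dT c0 rl n T) :=
  \row_k (#|[set v | wl c0 rl G (nth (0, 0)%N (wl_idx c0 rl n T) k).1 v
                   == (nth (0, 0)%N (wl_idx c0 rl n T) k).2]|)%:R.

Definition enorm (R : realType) d (x : 'rV[R]_d) : R :=
  Num.sqrt (\sum_i (x 0 i) ^+ 2).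

Definition phiWLbar (R : realType) c0 rl n T (G : ugraph n) : 'rV[R]_(dT c0 rl n T) :=
  (enorm (phiWL R c0 rl T G))^-1 *: phiWL R c0 rl T G.

Definition E_WL (R : realType) c0 rl n T : (ugraph n -> 'rV[R]_(dT c0 rl n T)) -> Prop :=
  fun emb => emb = phiWL R c0 rl T.
Definition Ebar_WL (R : realType) c0 rl n T : (ugraph n -> 'rV[R]_(dT c0 rl n T)) -> Prop :=
  fun emb => emb = phiWLbar R c0 rl T.

(* (r, lambda)-separability of a labelled sample.  The convex hulls of  *)
(* the two classes are at distance >= 2 lambda iff every convex         *)
(* combination of class-0 points is at distance >= 2 lambda from every  *)
(* convex combination of class-1 points (vacuous if a class is empty).  *)
Definition separable (R : realType) d (r lam : R) (s : seq ('rV[R]_d * bool)) : Prop :=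
  (exists c : 'rV[R]_d, forall p, p \in s -> enorm (p.1 - c) <= r) /\
  (forall a b : 'I_(size s) -> R,
      (forall i, 0 <= a i) -> (forall i, 0 <= b i) ->
      (forall i : 'I_(size s), (nth (0, false) s i).2 -> a i = 0) ->
      (forall i : 'I_(size s), ~~ (nth (0, false) s i).2 -> b i = 0) ->
      \sum_i a i = 1 -> \sum_i b i = 1 ->
      2 * lam <= enorm (\sum_i a i *: (nth (0, false) s i).1
                        - \sum_i b i *: (nth (0, false) s i).1)).

(* partial concepts G_n -> {0,1,*}; None stands for * ; Some true = 1 *)
Definition pconcept n := ugraph n -> option bool.

Definition Hclass (R : realType) n d (E : (ugraph n -> 'rV[R]_d) -> Prop) (r lam : R)
    (h : pconcept n) : Prop :=
  forall s : seq (ugraph n), (forall G, G \in s -> h G != None) ->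
  exists emb, E emb /\
    separable r lam [seq (emb G, odflt false (h G)) | G <- s].

Definition shattered n (C : pconcept n -> Prop) (S : {set ugraph n}) : Prop :=
  forall tau : ugraph n -> bool,
  exists h, C h /\ forall G, G \in S -> h G = Some (tau G).

Definition VCdim n (C : pconcept n -> Prop) : nat :=
  \max_(S : {set ugraph n} | `[< shattered C S >]) #|S|.

Arguments E_WL R c0 rl n T : clear implicits.
Arguments Ebar_WL R c0 rl n T : clear implicits.

From HB Require Import structures.
From mathcomp Require Import all_boot all_order all_algebra all_fingroup.
From mathcomp Require Import boolp reals.
From mathcomp Require Import ring lra zify.

Set Implicit Arguments.
Unset Strict Implicit.
Unset Printing Implicit Defensive.
Import Order.TTheory GRing.Theory Num.Theory.
Local Open Scope ring_scope.

(* Upper bound: pair the points of a shattered set, x_j with x_(j+k).  Choosing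
   the signs greedily keeps the squared norm of the signed sum of the k
   differences below 4 k r^2, while labelling each pair according to its sign
   makes the difference of the two class centroids equal to that sum divided by
   k; the margin then forces k lambda^2 <= r^2.
   Lower bound: on a k-regular graph all vertices keep a single 1-WL colour,
   which from round 1 on determines k.  So the WL vectors of regular graphs of
   distinct degrees have disjoint supports outside round 0 and norm
   sqrt(T+1) n, and two disjoint convex combinations of m of them are at
   distance at least 2 sqrt(T) n / sqrt(m).  Circulant graphs provide about
   min(m, n/2) distinct degrees. *)

Lemma big_nat_pairs (V : nmodType) k (F : nat -> V) :
  \sum_(0 <= i < k + k) F i = \sum_(0 <= j < k) (F j + F (j + k)%N).
Proof.
rewrite (big_cat_nat _ (leq_addr k k)) //= big_split /=; congr (_ + _).
by rewrite -{1}(add0n k) big_addn addnK.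
Qed.

Lemma sum_seq_pred1 (V : nmodType) (T : eqType) (s : seq T) a (y : V) :
  uniq s -> a \in s -> \sum_(c <- s) (if c == a then y else 0) = y.
Proof.
by move=> s_uniq a_s; rewrite -big_mkcond big_const_seq count_uniq_mem // a_s /= addr0.
Qed.

Lemma map_cst_nseq (T U : Type) (c : U) (s : seq T) : [seq c | _ <- s] = nseq (size s) c.
Proof. by elim: s => //= x s ->. Qed.

Lemma card_set_count n (P : pred 'I_n) : #|[set u | P u]| = count P (enum 'I_n).
Proof. by rewrite cardsE cardE -size_filter enumT /enum_mem. Qed.

Section SumsOfSquares.
Variable R : realFieldType.

Lemma sqr_sum_le_card (I : finType) (S : {set I}) (u : I -> R) :
  (\sum_(i in S) u i) ^+ 2 <= #|S|%:R * \sum_(i in S) u i ^+ 2.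
Proof.
have [S0|Sp] := posnP #|S|.
  have -> : S = set0 by apply/eqP; rewrite -cards_eq0 S0.
  by rewrite !big_set0 expr0n cards0 mul0r.
set m : R := #|S|%:R; set U := \sum_(i in S) u i.
have m0 : 0 < m by rewrite ltr0n.
(* The variance around the mean U / m is nonnegative. *)
have var0 : 0 <= \sum_(i in S) (u i - U / m) ^+ 2.
  by apply: sumr_ge0 => i _; apply: sqr_ge0.
have varE : forall mu, \sum_(i in S) (u i - mu) ^+ 2
    = \sum_(i in S) u i ^+ 2 - 2 * mu * U + mu ^+ 2 * m.
  move=> mu; rewrite /m mulr_natr -sumr_const /U mulr_sumr -sumrB -big_split /=.
  by apply: eq_bigr => i _; ring.
have meanE : \sum_(i in S) u i ^+ 2 - 2 * (U / m) * U + (U / m) ^+ 2 * m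
    = \sum_(i in S) u i ^+ 2 - U ^+ 2 / m by field; rewrite gt_eqF.
rewrite varE meanE subr_ge0 ler_pdivrMr // in var0.
by rewrite mulrC.
Qed.

Lemma sum_sqr_fibres (I : finType) (T : eqType) (S : {set I}) (f : I -> T)
    (s : seq T) (y : I -> R) :
  {in S &, injective f} -> uniq s -> (forall i, i \in S -> f i \in s) ->
  \sum_(c <- s) (\sum_(i in S | f i == c) y i) ^+ 2 = \sum_(i in S) y i ^+ 2.
Proof.
move=> f_inj s_uniq f_s.
have fibre c : (\sum_(i in S | f i == c) y i) ^+ 2 = \sum_(i in S | f i == c) y i ^+ 2.
  case: (pickP [pred i | (i \in S) && (f i == c)]) => [i0 /andP [i0S /eqP fi0] | none].
    have fibre1 : [pred i | (i \in S) && (f i == c)] =1 pred1 i0.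
      move=> i /=; apply/andP/eqP => [[iS /eqP fi] | ->]; last by rewrite i0S fi0.
      by apply: f_inj => //; rewrite fi fi0.
    by rewrite !(big_pred1 i0 fibre1).
  by rewrite !big_pred0 ?expr0n.
under eq_bigr do rewrite fibre big_mkcondr.
rewrite exchange_big; apply: eq_bigr => i iS.
by under eq_bigr do rewrite eq_sym; rewrite sum_seq_pred1 ?f_s.
Qed.

Lemma disjoint_weights_card (I : finType) (S : {set I}) (A B : I -> R) :
  (forall i, i \in S -> A i * B i = 0) ->
  \sum_(i in S) A i = 1 -> \sum_(i in S) B i = 1 -> (1 < #|S|)%N.
Proof.
move=> AB sA sB; rewrite ltnNge leq_eqVlt ltnS leqn0 cards_eq0.
apply/negP => /orP [/cards1P [i0 S1] | /eqP S0].
  move: sA sB (AB i0); rewrite S1 !big_set1 inE eqxx => -> -> /(_ isT) /eqP.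
  by rewrite mulr1 oner_eq0.
by move: sA; rewrite S0 big_set0 => /eqP; rewrite eq_sym oner_eq0.
Qed.

Lemma disjoint_weights_sqr_ge (I : finType) (S : {set I}) (A B : I -> R) :
  (forall i, i \in S -> A i * B i = 0) ->
  \sum_(i in S) A i = 1 -> \sum_(i in S) B i = 1 ->
  4 <= #|S|%:R * \sum_(i in S) (A i - B i) ^+ 2.
Proof.
move=> AB sA sB.
have -> : \sum_(i in S) (A i - B i) ^+ 2 = \sum_(i in S) (A i + B i) ^+ 2.
  apply: eq_bigr => i iS.
  have -> : (A i - B i) ^+ 2 = (A i + B i) ^+ 2 - 4 * (A i * B i) by ring.
  by rewrite AB // mulr0 subr0.
apply: le_trans (sqr_sum_le_card S (fun i => A i + B i)).
by rewrite big_split /= sA sB; lra.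
Qed.

End SumsOfSquares.

Section EuclideanNorm.
Variable R : realType.

Definition sumsq d (x : 'rV[R]_d) : R := \sum_i x 0 i ^+ 2.
Definition dotv d (x y : 'rV[R]_d) : R := \sum_i x 0 i * y 0 i.

Lemma sumsq_ge0 d (x : 'rV[R]_d) : 0 <= sumsq x.
Proof. by apply: sumr_ge0 => i _; apply: sqr_ge0. Qed.

Lemma enorm_ge0 d (x : 'rV[R]_d) : 0 <= enorm x.
Proof. exact: sqrtr_ge0. Qed.

Lemma sqr_enorm d (x : 'rV[R]_d) : enorm x ^+ 2 = sumsq x.
Proof. by rewrite sqr_sqrtr // sumsq_ge0. Qed.

Lemma enorm_le_sumsq d (x : 'rV[R]_d) r : 0 <= r -> (enorm x <= r) = (sumsq x <= r ^+ 2).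
Proof. by move=> r0; rewrite -sqr_enorm ler_sqr // nnegrE enorm_ge0. Qed.

Lemma enorm_ge_sumsq d (x : 'rV[R]_d) r : 0 <= r -> (r <= enorm x) = (r ^+ 2 <= sumsq x).
Proof. by move=> r0; rewrite -sqr_enorm ler_sqr // nnegrE enorm_ge0. Qed.

Lemma sumsqD d (x y : 'rV[R]_d) : sumsq (x + y) = sumsq x + 2 * dotv x y + sumsq y.
Proof.
rewrite /sumsq /dotv mulr_sumr -!big_split /=.
by apply: eq_bigr => i _; rewrite !mxE; ring.
Qed.

Lemma sumsqN d (x : 'rV[R]_d) : sumsq (- x) = sumsq x.
Proof. by apply: eq_bigr => i _; rewrite mxE sqrrN. Qed.

Lemma dotvN d (x y : 'rV[R]_d) : dotv x (- y) = - dotv x y.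
Proof. by rewrite /dotv -sumrN; apply: eq_bigr => i _; rewrite mxE mulrN. Qed.

Lemma sumsqZ d (a : R) (x : 'rV[R]_d) : sumsq (a *: x) = a ^+ 2 * sumsq x.
Proof. by rewrite /sumsq mulr_sumr; apply: eq_bigr => i _; rewrite mxE exprMn. Qed.

Lemma enormZ d (a : R) (x : 'rV[R]_d) : enorm (a *: x) = `|a| * enorm x.
Proof. by rewrite /enorm -/(sumsq _) sumsqZ sqrtrM ?sqr_ge0 // sqrtr_sqr. Qed.

Lemma sumsqB_le d (x y : 'rV[R]_d) : sumsq (x - y) <= 2 * sumsq x + 2 * sumsq y.
Proof.
rewrite /sumsq !mulr_sumr -big_split /=; apply: ler_sum => i _.
by rewrite !mxE; have := sqr_ge0 (x 0 i + y 0 i); nra.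
Qed.

(* Choosing each sign against the running sum makes the cross term nonpositive. *)
Lemma exists_signs_sumsq_le d (u : nat -> 'rV[R]_d) k : exists sg : nat -> bool,
  sumsq (\sum_(0 <= j < k) (if sg j then - u j else u j))
    <= \sum_(0 <= j < k) sumsq (u j).
Proof.
elim: k => [|k [sg IH]].
  by exists xpred0; rewrite !big_geq // /sumsq big1 // => i _; rewrite mxE expr0n.
set v := \sum_(0 <= j < k) _ in IH.
exists (fun j => if j == k then 0 < dotv v (u k) else sg j).
rewrite !big_nat_recr //= eqxx.
have -> : \sum_(0 <= j < k)
    (if (if j == k then 0 < dotv v (u k) else sg j) then - u j else u j) = v.
  by apply: eq_big_nat => j /andP [_ jk]; rewrite ltn_eqF.
case: ltrP => cross; rewrite sumsqD ?sumsqN ?dotvN; lra.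
Qed.

End EuclideanNorm.

(** * The margin bound *)

Section MarginUpperBound.
Variables (R : realType) (d : nat).

Lemma separable_iota N (x : nat -> 'rV[R]_d) (lab : nat -> bool) (r lam : R) :
  separable r lam [seq (x i, lab i) | i <- iota 0 N] ->
  (exists c, forall i, (i < N)%N -> enorm (x i - c) <= r) /\
  forall a b : nat -> R, (forall i, 0 <= a i) -> (forall i, 0 <= b i) ->
    (forall i, lab i -> a i = 0) -> (forall i, ~~ lab i -> b i = 0) ->
    \sum_(0 <= i < N) a i = 1 -> \sum_(0 <= i < N) b i = 1 ->
    2 * lam <= enorm (\sum_(0 <= i < N) (a i - b i) *: x i).
Proof.
set s := [seq _ | i <- _] => -[[c ball] margin].
have size_s : size s = N by rewrite size_map size_iota.
have nth_s i : (i < N)%N -> nth (0, false) s i = (x i, lab i).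
  by move=> iN; rewrite (nth_map 0%N) ?size_iota // nth_iota.
have sum_s (V : nmodType) (F : nat -> V) :
    \sum_(i < size s) F i = \sum_(0 <= i < N) F i by rewrite -size_s big_mkord.
split.
  by exists c => i iN; apply: (ball (x i, lab i)); rewrite -(nth_s i iN) mem_nth ?size_s.
move=> a b a0 b0 az bz sa sb.
have in_s (i : 'I_(size s)) : (i < N)%N by rewrite -size_s.
have az' (i : 'I_(size s)) : (nth (0, false) s i).2 -> a i = 0.
  by rewrite nth_s //; apply: az.
have bz' (i : 'I_(size s)) : ~~ (nth (0, false) s i).2 -> b i = 0.
  by rewrite nth_s //; apply: bz.
have := margin _ _ (fun i => a0 i) (fun i => b0 i) az' bz'.
rewrite (sum_s _ a) (sum_s _ b) -sumrB.
rewrite (sum_s _ (fun i => a i *: (nth (0, false) s i).1 - b i *: (nth (0, false) s i).1)).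
move=> /(_ sa sb).
rewrite (eq_big_nat _ _ (F2 := fun i => (a i - b i) *: x i)) //.
by move=> i /andP [_ iN]; rewrite nth_s //= scalerBl.
Qed.

Lemma separable_paired_margin k (x : nat -> 'rV[R]_d) (lab : nat -> bool) (r lam : R) :
  (0 < k)%N -> (forall j, (j < k)%N -> lab (j + k)%N = ~~ lab j) ->
  separable r lam [seq (x i, lab i) | i <- iota 0 (k + k)] ->
  k%:R * (2 * lam) <=
    enorm (\sum_(0 <= j < k) (if lab j then x (j + k)%N - x j else x j - x (j + k)%N)).
Proof.
move=> k0 lab_pair /separable_iota [_ margin].
have kR : 0 < k%:R :> R by rewrite ltr0n.
pose a i := if lab i then 0 else k%:R^-1 : R.
pose b i := if lab i then k%:R^-1 else 0 : R.
have pair_sum1 (w : nat -> R) : (forall j, (j < k)%N -> w j + w (j + k)%N = k%:R^-1) ->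
    \sum_(0 <= i < k + k) w i = 1.
  move=> wk; rewrite big_nat_pairs (eq_big_nat _ _ (F2 := fun _ => k%:R^-1)).
    by rewrite sumr_const_nat subn0 -[_ *+ k]mulr_natr mulVf ?gt_eqF.
  by move=> j /andP [_ jk]; apply: wk.
have sa : \sum_(0 <= i < k + k) a i = 1.
  apply: pair_sum1 => j jk; rewrite /a lab_pair //.
  by case: (lab j); rewrite /= ?add0r ?addr0.
have sb : \sum_(0 <= i < k + k) b i = 1.
  apply: pair_sum1 => j jk; rewrite /b lab_pair //.
  by case: (lab j); rewrite /= ?add0r ?addr0.
have w0 : 0 <= k%:R^-1 :> R by rewrite invr_ge0 ltW.
have := margin a b _ _ _ _ sa sb.
rewrite big_nat_pairs (eq_big_nat _ _ (F2 := fun j => k%:R^-1 *: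
    (if lab j then x (j + k)%N - x j else x j - x (j + k)%N))); last first.
  move=> j /andP [_ jk]; rewrite /a /b lab_pair //.
  by case: (lab j) => /=; apply/rowP => l; rewrite !mxE; ring.
rewrite -scaler_sumr enormZ ger0_norm // (ler_pdivlMl _ _ kR).
apply.
- by move=> i; rewrite /a; case: (lab i).
- by move=> i; rewrite /b; case: (lab i).
- by move=> i; rewrite /a => ->.
- by move=> i; rewrite /b => /negbTE ->.
Qed.

Lemma paired_separable_le k (x : nat -> 'rV[R]_d) (r lam : R) : 0 <= lam ->
  (forall lab : nat -> bool, separable r lam [seq (x i, lab i) | i <- iota 0 (k + k)]) ->
  k%:R * lam ^+ 2 <= r ^+ 2.
Proof.
move=> lam0 sep.
have [->|k0] := posnP k; first by rewrite mul0r sqr_ge0.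
pose u j := x j - x (j + k)%N.
have [sg sg_le] := exists_signs_sumsq_le u k.
pose lab i := if (i < k)%N then sg i else ~~ sg (i - k)%N.
have lab_pair j : (j < k)%N -> lab (j + k)%N = ~~ lab j.
  by move=> jk; rewrite /lab jk ltnNge leq_addl /= addnK.
have [[c ball] _] := separable_iota (sep lab).
have r0 : 0 <= r by apply: le_trans (ball 0%N _); [exact: enorm_ge0 | lia].
have u_le j : (j < k)%N -> sumsq (u j) <= 4 * r ^+ 2.
  move=> jk; have -> : u j = (x j - c) - (x (j + k)%N - c) by rewrite /u opprB addrA subrK.
  have h1 : sumsq (x j - c) <= r ^+ 2 by rewrite -enorm_le_sumsq // ball //; lia.
  have h2 : sumsq (x (j + k)%N - c) <= r ^+ 2 by rewrite -enorm_le_sumsq // ball //; lia.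
  have := sumsqB_le (x j - c) (x (j + k)%N - c); lra.
have := separable_paired_margin k0 lab_pair (sep lab).
rewrite (eq_big_nat _ _ (F2 := fun j => if sg j then - u j else u j)); last first.
  by move=> j /andP [_ jk]; rewrite /lab jk /u; case: (sg j); rewrite ?opprB.
rewrite enorm_ge_sumsq ?mulr_ge0 ?ler0n // => margin.
have sum_le : \sum_(0 <= j < k) sumsq (u j) <= 4 * r ^+ 2 * k%:R.
  apply: (@le_trans _ _ (\sum_(0 <= j < k) 4 * r ^+ 2)).
    by apply: ler_sum_nat => j /andP [_ jk]; apply: u_le.
  by rewrite sumr_const_nat subn0 mulr_natr.
have kR : 0 < k%:R :> R by rewrite ltr0n.
have := le_trans margin (le_trans sg_le sum_le).
rewrite !expr2; nra.
Qed.

Lemma shattered_card_le n (E : (ugraph n -> 'rV[R]_d) -> Prop) emb0 (r lam : R) :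
  (forall emb, E emb -> emb = emb0) -> 0 < lam ->
  forall S, shattered (Hclass E r lam) S -> #|S|%:R <= 2 * (r ^+ 2 / lam ^+ 2) + 1.
Proof.
move=> E_emb0 lam0 S shS.
set k := #|S|./2.
have card_le : (#|S| <= (k + k).+1)%N.
  by rewrite addnn /k -{1}(odd_double_half #|S|); case: odd.
have kk : (k + k <= #|S|)%N by rewrite addnn /k -{2}(odd_double_half #|S|) leq_addl.
suff k_le : k%:R * lam ^+ 2 <= r ^+ 2.
  have : (#|S|%:R : R) <= (k + k).+1%:R by rewrite ler_nat.
  have : k%:R <= r ^+ 2 / lam ^+ 2 by rewrite ler_pdivlMr // exprn_gt0.
  rewrite -addn1 !natrD; lra.
have [k0|kpos] := posnP k; first by rewrite k0 mul0r sqr_ge0.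
have [G0 _] : exists G0, G0 \in S by apply/set0Pn; rewrite -card_gt0; lia.
pose L := take (k + k) (enum S).
have size_L : size L = (k + k)%N by rewrite size_takel // -cardE.
have uniq_L : uniq L by rewrite take_uniq ?enum_uniq.
have L_S G : G \in L -> G \in S by move/mem_take; rewrite mem_enum.
apply: (paired_separable_le (x := fun i => emb0 (nth G0 L i))) => [|lab]; first exact: ltW.
have [h [hC hS]] := shS (fun G => lab (index G L)).
have supp_L G : G \in L -> h G != None by move=> /L_S /hS ->.
have [emb [/E_emb0 -> sep]] := hC L supp_L.
have -> : [seq (emb0 (nth G0 L i), lab i) | i <- iota 0 (k + k)]
    = [seq (emb0 G, odflt false (h G)) | G <- L].
  rewrite -{2}(mkseq_nth G0 L) /mkseq size_L -map_comp.
  apply/eq_in_map => i; rewrite mem_iota => /andP [_ iL] /=.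
  by rewrite hS ?L_S ?mem_nth ?size_L //= index_uniq ?size_L.
exact: sep.
Qed.

End MarginUpperBound.

Lemma shattered_card_le_VCdim n (C : pconcept n -> Prop) S :
  shattered C S -> (#|S| <= VCdim C)%N.
Proof.
move=> shS.
exact: (@leq_bigmax_cond _ (fun S => `[< shattered C S >]) (fun S => #|S|) S (asboolT shS)).
Qed.

Lemma VCdim_le (R : realType) n (C : pconcept n -> Prop) (B : R) : 0 <= B ->
  (forall S, shattered C S -> #|S|%:R <= B) -> (VCdim C)%:R <= B.
Proof.
move=> B0 card_le; elim/big_ind: (VCdim C) => //.
  by move=> x y hx hy; rewrite /maxn; case: ltnP.
by move=> S /asboolP; apply: card_le.
Qed.

Lemma VCdim_Hclass_le (R : realType) n d (E : (ugraph n -> 'rV[R]_d) -> Prop) emb0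
    (r lam : R) :
  (forall emb, E emb -> emb = emb0) -> 0 < lam ->
  (VCdim (Hclass E r lam))%:R <= 2 * (r ^+ 2 / lam ^+ 2) + 1.
Proof.
move=> E_emb0 lam0; apply: VCdim_le; last exact: shattered_card_le E_emb0 lam0.
by rewrite addr_ge0 // mulr_ge0 // divr_ge0 // sqr_ge0.
Qed.

(** * Regular and circulant graphs *)

Definition regular n (G : ugraph n) (k : nat) : Prop :=
  forall v, #|[set u | adj G v u]| = k.

Section CanonicalForm.
Variable n : nat.
Implicit Types (E : {set 'I_n * 'I_n}) (s : 'S_n).

Lemma perm_graphM s t E : perm_graph t (perm_graph s E) = perm_graph (s * t)%g E.
Proof. by rewrite /perm_graph -imset_comp; apply: eq_imset => x; rewrite /= !permM. Qed.

Lemma mem_perm_graph s E u v :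
  ((u, v) \in perm_graph s E) = (((s^-1)%g u, (s^-1)%g v) \in E).
Proof.
have s_inj : injective (fun p : 'I_n * 'I_n => (s p.1, s p.2)).
  by move=> [a b] [c e] /= [/perm_inj -> /perm_inj ->].
by rewrite -{1}(permKV s u) -{1}(permKV s v) (mem_imset (mem E) (_, _) s_inj).
Qed.

Lemma perm_graph_simple s E : is_simple E -> is_simple (perm_graph s E).
Proof.
case/andP => /forallP sym /forallP irr; apply/andP; split.
  apply/forallP => u; apply/forallP => v.
  by rewrite !mem_perm_graph; apply: (forallP (sym _)).
by apply/forallP => u; rewrite mem_perm_graph.
Qed.

Definition canon_perm E : 'S_n := [arg min_(s < 1%g) enum_rank (perm_graph s E)].

Lemma canon_perm_canon E : is_canon (perm_graph (canon_perm E) E).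
Proof.
apply/forallP => s; rewrite perm_graphM /canon_perm.
by case: arg_minnP => // s0 _; apply.
Qed.

Definition ugraph_of E (simpleE : is_simple E) : ugraph n :=
  exist _ (perm_graph (canon_perm E) E)
    (introT andP (conj (perm_graph_simple (canon_perm E) simpleE) (canon_perm_canon E))).

Lemma regular_ugraph_of E (simpleE : is_simple E) k :
  (forall w, #|[set u | (w, u) \in E]| = k) -> regular (ugraph_of simpleE) k.
Proof.
move=> degE v; set s := canon_perm E; rewrite -(degE ((s^-1)%g v)).
rewrite -[RHS](card_imset _ (@perm_inj _ s)) (can_imset_pre _ (permK s)).
by apply: eq_card => u; rewrite !inE /adj mem_perm_graph.
Qed.

End CanonicalForm.

Section Circulant.
Variable p : nat.

Definition circ_conn (d : nat) : {set 'I_p.+1} :=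
  [set x : 'I_p.+1 | (0 < x)%N && ((x <= d)%N || (p.+1 - d <= x)%N)].

Definition circulant d : {set 'I_p.+1 * 'I_p.+1} := [set e | e.2 - e.1 \in circ_conn d].

Lemma circ_connN d (x : 'I_p.+1) : (- x \in circ_conn d) = (x \in circ_conn d).
Proof.
rewrite !inE; have [x0|xpos] := posnP x.
  have -> : x = 0 by apply: val_inj.
  by rewrite oppr0.
have -> : nat_of_ord (- x) = (p.+1 - x)%N by rewrite /= modn_small //; lia.
by have := ltn_ord x => xp; apply/idP/idP; lia.
Qed.

Lemma mem_circulant d e : (e \in circulant d) = (e.2 - e.1 \in circ_conn d).
Proof. by rewrite inE. Qed.

Lemma circulant_simple d : is_simple (circulant d).
Proof.
apply/andP; split.
  by apply/forallP => u; apply/forallP => v; rewrite !mem_circulant /= -circ_connN opprB.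
by apply/forallP => u; rewrite mem_circulant subrr inE.
Qed.

Lemma card_circulant_nbhd d (w : 'I_p.+1) :
  #|[set u | (w, u) \in circulant d]| = #|circ_conn d|.
Proof.
rewrite -[RHS](card_imset _ (addIr w)) (can_imset_pre _ (addrK w)).
by apply: eq_card => u; rewrite !inE.
Qed.

Lemma card_circ_conn_lt d e :
  (d < e)%N -> (d + e <= p)%N -> (#|circ_conn d| < #|circ_conn e|)%N.
Proof.
move=> de dep; apply: proper_card; apply/properP; split.
  by apply/subsetP => x; rewrite !inE => /andP [-> /=]; lia.
have ep : (e < p.+1)%N by lia.
by exists (Ordinal ep); rewrite !inE /=; lia.
Qed.

Definition circ_graph d : ugraph p.+1 := ugraph_of (circulant_simple d).

Lemma circ_graph_regular d : regular (circ_graph d) #|circ_conn d|.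
Proof. exact/regular_ugraph_of/card_circulant_nbhd. Qed.

Lemma card_circ_conn_inj m : (m.*2 <= p.+3)%N ->
  injective (fun d : 'I_m => #|circ_conn d|).
Proof.
move=> mp.
have lt_card (a b : 'I_m) : (a < b)%N -> (#|circ_conn a| < #|circ_conn b|)%N.
  by move=> ab; apply: card_circ_conn_lt => //; have := ltn_ord b; lia.
move=> d e de; apply: val_inj.
by case: (ltngtP d e) => // lt; have := lt_card _ _ lt; rewrite de ltnn.
Qed.

Lemma circ_graph_inj m : (m.*2 <= p.+3)%N -> injective (fun d : 'I_m => circ_graph d).
Proof.
move=> mp d e /= de; apply: (card_circ_conn_inj mp) => /=.
by rewrite -(circ_graph_regular d ord0) de circ_graph_regular.
Qed.

End Circulant.

(** * 1-WL on regular graphs *)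

Section WLRegular.
Variables (c0 : nat) (rl : nat -> seq nat -> nat).

Fixpoint wl_reg_colour t k :=
  if t is t'.+1 then rl (wl_reg_colour t' k) (sort leq (nseq k (wl_reg_colour t' k)))
  else c0.

Lemma wl_regular n (G : ugraph n) k : regular G k ->
  forall t v, wl c0 rl G t v = wl_reg_colour t k.
Proof.
move=> regG; elim=> //= t IH v.
by rewrite IH (eq_map IH) map_cst_nseq size_filter -card_set_count regG.
Qed.

Lemma wl_reg_colour_inj t :
  relabel_injective rl -> (0 < t)%N -> injective (wl_reg_colour t).
Proof. by case: t => // t rl_inj _ k k' /= /rl_inj [_ /perm_size]; rewrite !size_nseq. Qed.

Lemma wl_reg_colour_Sigma p (G : ugraph p.+1) k t : regular G k ->
  wl_reg_colour t k \in Sigma c0 rl p.+1 t.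
Proof.
move=> regG; rewrite mem_undup; apply/flatten_mapP; exists G; first by rewrite mem_enum.
by apply/mapP; exists ord0; rewrite ?mem_enum ?(wl_regular regG).
Qed.

Variable R : realType.

Lemma sum_wl_idx (V : nmodType) n T (F : nat * nat -> V) :
  \sum_(i < dT c0 rl n T) F (nth (0, 0)%N (wl_idx c0 rl n T) i) =
  \sum_(0 <= t < T.+1) \sum_(c <- Sigma c0 rl n t) F (t, c).
Proof.
rewrite -(big_mkord xpredT (F \o nth _ _)) -(big_nth _ xpredT F) /wl_idx.
by rewrite big_flatten big_map; apply: eq_bigr => t _; rewrite big_map.
Qed.

Lemma phiWL_regular n T (G : ugraph n) k : regular G k ->
  forall i, phiWL R c0 rl T G 0 i =
    if wl_reg_colour (nth (0, 0)%N (wl_idx c0 rl n T) i).1 k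
       == (nth (0, 0)%N (wl_idx c0 rl n T) i).2
    then n%:R else 0.
Proof.
move=> regG i; rewrite /phiWL mxE; set q := nth _ _ _.
have -> : [set v | wl c0 rl G q.1 v == q.2] =
    if wl_reg_colour q.1 k == q.2 then setT else set0.
  by apply/setP => v; rewrite inE (wl_regular regG); case: ifP; rewrite inE.
by case: ifP; rewrite ?cardsT ?card_ord ?cards0.
Qed.

Lemma sumsq_phiWL_regular p T (G : ugraph p.+1) k : regular G k ->
  sumsq (phiWL R c0 rl T G) = T.+1%:R * p.+1%:R ^+ 2.
Proof.
move=> regG; rewrite /sumsq.
under eq_bigr => i _ do rewrite (phiWL_regular regG).
rewrite (sum_wl_idx _ _ (fun tc =>
  (if wl_reg_colour tc.1 k == tc.2 then p.+1%:R else 0) ^+ 2)).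
rewrite (eq_bigr (fun _ => p.+1%:R ^+ 2)); last first.
  move=> t _; under eq_bigr do rewrite (fun_if (fun x : R => x ^+ 2)) expr0n eq_sym.
  by rewrite sum_seq_pred1 ?undup_uniq ?(wl_reg_colour_Sigma _ regG).
by rewrite sumr_const_nat subn0 mulr_natl.
Qed.

Lemma enorm_phiWL_regular p T (G : ugraph p.+1) k : regular G k ->
  enorm (phiWL R c0 rl T G) = Num.sqrt T.+1%:R * p.+1%:R.
Proof.
move=> regG; rewrite /enorm -/(sumsq _) (sumsq_phiWL_regular _ regG).
by rewrite sqrtrM ?ler0n // sqrtr_sqr ger0_norm ?ler0n.
Qed.

Lemma sumsq_phiWL_comb_ge p T (S : {set ugraph p.+1}) (deg : ugraph p.+1 -> nat)
    (gam : ugraph p.+1 -> R) :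
  relabel_injective rl -> {in S &, injective deg} ->
  (forall G, G \in S -> regular G (deg G)) ->
  T%:R * p.+1%:R ^+ 2 * \sum_(G in S) gam G ^+ 2
    <= sumsq (\sum_(G in S) gam G *: phiWL R c0 rl T G).
Proof.
move=> rl_inj deg_inj regS.
pose q i := nth (0, 0)%N (wl_idx c0 rl p.+1 T) i.
have entry i : (\sum_(G in S) gam G *: phiWL R c0 rl T G) 0 i =
    \sum_(G in S | wl_reg_colour (q i).1 (deg G) == (q i).2) p.+1%:R * gam G.
  rewrite summxE big_mkcondr; apply: eq_bigr => G GS.
  by rewrite mxE (phiWL_regular (regS G GS)); case: ifP; rewrite ?mulr0 // mulrC.
rewrite /sumsq (eq_bigr _ (fun i _ => congr1 (fun x => x ^+ 2) (entry i))).
rewrite (sum_wl_idx _ _ (fun tc => (\sum_(G in S | wl_reg_colour tc.1 (deg G) == tc.2)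
  p.+1%:R * gam G) ^+ 2)) big_nat_recl //=.
have round t : \sum_(c <- Sigma c0 rl p.+1 t.+1)
    (\sum_(G in S | wl_reg_colour t.+1 (deg G) == c) p.+1%:R * gam G) ^+ 2
    = p.+1%:R ^+ 2 * \sum_(G in S) gam G ^+ 2.
  rewrite (sum_sqr_fibres (f := fun G => wl_reg_colour t.+1 (deg G))).
  - by rewrite mulr_sumr; apply: eq_bigr => G _; rewrite exprMn.
  - by move=> G G' GS G'S /(wl_reg_colour_inj rl_inj) /deg_inj; apply.
  - exact: undup_uniq.
  - by move=> G GS; apply: wl_reg_colour_Sigma (regS G GS).
under [X in _ <= _ + X]eq_bigr do rewrite round.
rewrite sumr_const_nat subn0 -mulrA mulr_natl ler_wpDl //.
by apply: sumr_ge0 => c _; apply: sqr_ge0.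
Qed.

End WLRegular.

(** * Shattering by regular graphs *)

Section LowerBound.
Variable R : realType.

Lemma separable_of_weights (I : finType) (S : {set I}) d (f : I -> 'rV[R]_d)
    (lab : I -> bool) (r lam : R) (s : seq I) :
  {subset s <= S} -> (forall i, i \in S -> enorm (f i) <= r) ->
  (forall A B : I -> R, (forall i, 0 <= A i) -> (forall i, 0 <= B i) ->
     (forall i, i \in S -> lab i -> A i = 0) ->
     (forall i, i \in S -> ~~ lab i -> B i = 0) ->
     \sum_(i in S) A i = 1 -> \sum_(i in S) B i = 1 ->
     2 * lam <= enorm (\sum_(i in S) (A i - B i) *: f i)) ->
  separable r lam [seq (f i, lab i) | i <- s].
Proof.
move=> sS ball margin; split.
  by exists 0 => _ /mapP [i si ->]; rewrite subr0; apply/ball/sS.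
case: s sS => [_ a b _ _ _ _|i0 s' sS].
  by rewrite big_ord0 => /eqP; rewrite eq_sym oner_eq0.
set s := i0 :: s'.
set smp := [seq _ | i <- s]; move=> a b a0 b0 az bz sa sb.
have size_smp : size smp = size s by rewrite size_map.
pose g (j : 'I_(size smp)) := nth i0 s j.
have g_S j : g j \in S by apply/sS/mem_nth; rewrite -size_smp.
have nthE (j : 'I_(size smp)) : nth (0, false) smp j = (f (g j), lab (g j)).
  by rewrite (nth_map i0) // -size_smp.
pose A i := \sum_(j | g j == i) a j.
pose B i := \sum_(j | g j == i) b j.
have -> : \sum_j a j *: (nth (0, false) smp j).1 - \sum_j b j *: (nth (0, false) smp j).1
    = \sum_(i in S) (A i - B i) *: f i.
  rewrite -sumrB (partition_big g (mem S)) //=; apply: eq_bigr => i iS.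
  rewrite /A /B -sumrB scaler_suml; apply: eq_bigr => j /eqP gj.
  by rewrite nthE /= gj scalerBl.
apply: margin.
- by move=> i; apply: sumr_ge0 => j _; apply: a0.
- by move=> i; apply: sumr_ge0 => j _; apply: b0.
- by move=> i iS li; apply: big1 => j /eqP gj; apply: az; rewrite nthE /= gj.
- by move=> i iS li; apply: big1 => j /eqP gj; apply: bz; rewrite nthE /= gj.
- by rewrite -sa (partition_big g (mem S)) //=.
- by rewrite -sb (partition_big g (mem S)) //=.
Qed.

Variables (c0 : nat) (rl : nat -> seq nat -> nat).

Lemma regular_family_shattered p T (lam beta r : R) (S : {set ugraph p.+1})
    (deg : ugraph p.+1 -> nat) E emb0 :
  relabel_injective rl -> E emb0 ->
  (forall G, G \in S -> emb0 G = beta *: phiWL R c0 rl T G) ->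
  (forall G, G \in S -> enorm (emb0 G) <= r) ->
  {in S &, injective deg} -> (forall G, G \in S -> regular G (deg G)) -> 0 <= lam ->
  (#|S| <= 1)%N \/ #|S|%:R * lam ^+ 2 <= beta ^+ 2 * T%:R * p.+1%:R ^+ 2 ->
  shattered (Hclass E r lam) S.
Proof.
move=> rl_inj Eemb emb_phi ball deg_inj regS lam0 small tau.
pose h G := if G \in S then Some (tau G) else None.
exists h; split; last by move=> G GS; rewrite /h GS.
move=> s supp; exists emb0; split => //.
have sS : {subset s <= S} by move=> G /supp; rewrite /h; case: ifP.
apply: separable_of_weights sS ball _ => A B _ _ Az Bz sA sB.
have AB G : G \in S -> A G * B G = 0.
  move=> GS; move: (Az G GS) (Bz G GS); rewrite /h GS /=.
  by case: (tau G) => [-> // | _ -> //]; rewrite ?mul0r ?mulr0.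
have -> : \sum_(G in S) (A G - B G) *: emb0 G
    = beta *: \sum_(G in S) (A G - B G) *: phiWL R c0 rl T G.
  by rewrite scaler_sumr; apply: eq_bigr => G GS; rewrite emb_phi // !scalerA mulrC.
rewrite enorm_ge_sumsq ?mulr_ge0 // sumsqZ.
case: small => [|small]; first by rewrite leqNgt (disjoint_weights_card AB sA sB).
have four := disjoint_weights_sqr_ge AB sA sB.
have comb := @sumsq_phiWL_comb_ge c0 rl R p T S deg (fun G => A G - B G)
  rl_inj deg_inj regS.
set Q := \sum_(G in S) _ in four comb; set V := sumsq _ in comb *.
have Q0 : 0 <= Q by apply: sumr_ge0 => G _; apply: sqr_ge0.
have h1 : lam ^+ 2 * 4 <= lam ^+ 2 * (#|S|%:R * Q) by rewrite ler_wpM2l ?sqr_ge0.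
have h2 : #|S|%:R * lam ^+ 2 * Q <= beta ^+ 2 * T%:R * p.+1%:R ^+ 2 * Q.
  by rewrite ler_wpM2r.
have h3 : beta ^+ 2 * (T%:R * p.+1%:R ^+ 2 * Q) <= beta ^+ 2 * V.
  by rewrite ler_wpM2l ?sqr_ge0.
rewrite !expr2 in h1 h2 h3 *; nra.
Qed.

(* [rho] is the squared margin ratio that the regular graphs see; about [rho / 2]
   circulant graphs of distinct degrees are then shattered. *)
Lemma VCdim_regular_ge p T (lam beta r rho : R)
    (E : (ugraph p.+1 -> 'rV[R]_(dT c0 rl p.+1 T)) -> Prop) emb0 :
  relabel_injective rl -> E emb0 ->
  (forall G k, regular G k -> emb0 G = beta *: phiWL R c0 rl T G) ->
  (forall G k, regular G k -> enorm (emb0 G) <= r) -> 0 < lam ->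
  rho * lam ^+ 2 = beta ^+ 2 * T%:R * p.+1%:R ^+ 2 -> rho <= p.+1%:R ->
  rho / 4 <= (VCdim (Hclass E r lam))%:R.
Proof.
move=> rl_inj Eemb emb_phi ball lam0 rhoE rho_n.
have rho0 : 0 <= rho.
  rewrite -(pmulr_lge0 _ (exprn_gt0 2 lam0)) rhoE.
  by rewrite mulr_ge0 ?sqr_ge0 // mulr_ge0 ?sqr_ge0.
pose m := maxn 1 (Num.truncn (rho / 2)).
have /andP [trunc_le trunc_gt] := truncn_itv (divr_ge0 rho0 (ler0n R 2)).
have m_le : (m.*2 <= p.+3)%N.
  suff : ((Num.truncn (rho / 2)).*2 <= p.+1)%N by lia.
  by rewrite -(ler_nat R) -muln2 natrM; lra.
have m_rho : (m <= 1)%N \/ m%:R <= rho.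
  rewrite /m; case: (leqP (Num.truncn (rho / 2)) 1) => t1; first by left; lia.
  by right; lra.
have rho_m : rho / 4 <= m%:R.
  have : (Num.truncn (rho / 2))%:R <= m%:R :> R by rewrite ler_nat leq_maxr.
  have : 1 <= m%:R :> R by rewrite ler1n leq_maxl.
  have : rho / 2 < (Num.truncn (rho / 2))%:R + 1 by rewrite natr1.
  lra.
pose S := [set circ_graph p d | d : 'I_m].
have card_S : #|S| = m by rewrite card_imset ?card_ord //; apply: circ_graph_inj.
pose deg (G : ugraph p.+1) := #|[set u | adj G ord0 u]|.
have regS G : G \in S -> regular G (deg G).
  by case/imsetP => d _ ->; rewrite /deg circ_graph_regular; apply: circ_graph_regular.
have deg_inj : {in S &, injective deg}.
  move=> _ _ /imsetP [d _ ->] /imsetP [e _ ->].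
  by rewrite /deg !circ_graph_regular => /(card_circ_conn_inj m_le) ->.
have shS : shattered (Hclass E r lam) S.
  apply: (regular_family_shattered (deg := deg) rl_inj Eemb) => //.
  - by move=> G /regS; apply: emb_phi.
  - by move=> G /regS; apply: ball.
  - exact: ltW.
  - rewrite card_S; case: m_rho => [|m_rho]; [by left | right].
    by rewrite -rhoE ler_wpM2r ?sqr_ge0.
move: (shattered_card_le_VCdim shS); rewrite card_S -(ler_nat R); lra.
Qed.

End LowerBound.

Section Bounds.
Variables (R : realType) (c0 : nat) (rl : nat -> seq nat -> nat).
Hypothesis rl_inj : relabel_injective rl.

Lemma VCdim_E_WL_bounds (T n : nat) (lam : R) : (0 < T)%N -> 0 < lam ->
  let r := Num.sqrt (T.+1)%:R * n%:R in
  r ^+ 2 / lam ^+ 2 <= n%:R ->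
  1 / 8 * (r ^+ 2 / lam ^+ 2) <= (VCdim (Hclass (E_WL R c0 rl n T) r lam))%:R /\
  (VCdim (Hclass (E_WL R c0 rl n T) r lam))%:R <= 2 * (1 + r ^+ 2 / lam ^+ 2).
Proof.
move=> T0 lam0 r; set x := r ^+ 2 / lam ^+ 2 => x_n.
have x0 : 0 <= x by rewrite divr_ge0 ?sqr_ge0.
split; last first.
  apply: le_trans (VCdim_Hclass_le r (emb0 := phiWL R c0 rl T) _ lam0) _ => //.
  by rewrite -/x; lra.
case: n => [|p] in r x x_n x0 *; first by rewrite /x /r mulr0 expr0n /= !mul0r mulr0 ler0n.
have L0 : 0 < lam ^+ 2 by rewrite exprn_gt0.
have T1 : 1 <= T%:R :> R by rewrite ler1n.
set K := p.+1%:R ^+ 2 / lam ^+ 2.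
have K0 : 0 <= K by rewrite divr_ge0 ?sqr_ge0.
have xK : x = T%:R * K + K by rewrite /x /K /r exprMn sqr_sqrtr ?ler0n //; ring.
have emb_phi (G : ugraph p.+1) k :
    regular G k -> phiWL R c0 rl T G = 1 *: phiWL R c0 rl T G.
  by rewrite scale1r.
have ball (G : ugraph p.+1) k : regular G k -> enorm (phiWL R c0 rl T G) <= r.
  by move=> regG; rewrite (enorm_phiWL_regular _ _ _ _ regG).
have rhoE : T%:R * K * lam ^+ 2 = 1 ^+ 2 * T%:R * p.+1%:R ^+ 2.
  by rewrite /K expr1n mul1r -mulrA mulfVK ?gt_eqF.
have rho_n : T%:R * K <= p.+1%:R by apply: le_trans x_n; rewrite xK; lra.
apply: le_trans (VCdim_regular_ge rl_inj (erefl : E_WL R c0 rl p.+1 T _)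
  emb_phi ball lam0 rhoE rho_n).
rewrite xK; nra.
Qed.

Lemma VCdim_Ebar_WL_bounds (T n : nat) (lam : R) : (0 < T)%N -> 0 < lam ->
  let r := Num.sqrt (T%:R / (T.+1)%:R) in
  r ^+ 2 / lam ^+ 2 <= n%:R ->
  1 / 8 * (1 / lam ^+ 2) <= (VCdim (Hclass (Ebar_WL R c0 rl n T) 1 lam))%:R /\
  (VCdim (Hclass (Ebar_WL R c0 rl n T) 1 lam))%:R <= 2 * (1 + 1 / lam ^+ 2).
Proof.
move=> T0 lam0 r r_n.
have L0 : 0 < lam ^+ 2 by rewrite exprn_gt0.
have il0 : 0 < 1 / lam ^+ 2 by rewrite divr_gt0.
split; last first.
  apply: le_trans (VCdim_Hclass_le 1 (emb0 := phiWLbar R c0 rl T) _ lam0) _ => //.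
  by rewrite expr1n; lra.
have T1 : 1 <= T%:R :> R by rewrite ler1n.
have r2 : r ^+ 2 = T%:R / T.+1%:R by rewrite sqr_sqrtr // divr_ge0.
have r2_ge : 1 / 2 <= r ^+ 2.
  have TS : T.+1%:R = T%:R + 1 :> R by rewrite -natr1.
  by rewrite r2 ler_pdivlMr ?ltr0n // TS; lra.
have rE : r ^+ 2 / lam ^+ 2 = r ^+ 2 * (1 / lam ^+ 2) by rewrite mul1r.
case: n => [|p] in r_n *; first by move: r_n; rewrite rE; nra.
pose N : R := Num.sqrt T.+1%:R * p.+1%:R.
have N0 : 0 < N by rewrite mulr_gt0 ?sqrtr_gt0 ?ltr0n.
have emb_phi (G : ugraph p.+1) k :
    regular G k -> phiWLbar R c0 rl T G = N^-1 *: phiWL R c0 rl T G.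
  by move=> regG; rewrite /phiWLbar (enorm_phiWL_regular _ _ _ _ regG).
have ball (G : ugraph p.+1) k : regular G k -> enorm (phiWLbar R c0 rl T G) <= 1.
  move=> regG; rewrite (emb_phi _ _ regG) enormZ (enorm_phiWL_regular _ _ _ _ regG).
  by rewrite -/N ger0_norm ?invr_ge0 ?(ltW N0) // mulVf ?gt_eqF.
have rhoE : r ^+ 2 / lam ^+ 2 * lam ^+ 2 = N^-1 ^+ 2 * T%:R * p.+1%:R ^+ 2.
  rewrite mulfVK ?gt_eqF // r2 /N exprVn exprMn sqr_sqrtr ?ler0n //.
  by field; rewrite !paddr_eq0 ?ler01 ?ler0n // oner_eq0.
apply: le_trans (VCdim_regular_ge rl_inj (erefl : Ebar_WL R c0 rl p.+1 T _)
  emb_phi ball lam0 rhoE r_n).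
rewrite rE; nra.
Qed.

End Bounds.

Unset Implicit Arguments.

Theorem theorem4 (R : realType) (c0 : nat) (rl : nat -> seq nat -> nat)
  (Hrl : relabel_injective rl) :
  (exists c1 c2 : R, 0 < c1 /\ 0 < c2 /\
    forall (T n : nat) (lam : R), (0 < T)%N -> 0 < lam ->
      let r := Num.sqrt (T.+1)%:R * n%:R in
      r ^+ 2 / lam ^+ 2 <= n%:R ->
      c1 * (r ^+ 2 / lam ^+ 2) <= (VCdim (Hclass (E_WL R c0 rl n T) r lam))%:R
      /\ (VCdim (Hclass (E_WL R c0 rl n T) r lam))%:R <= c2 * (1 + r ^+ 2 / lam ^+ 2))
  /\
  (exists c1 c2 : R, 0 < c1 /\ 0 < c2 /\
    forall (T n : nat) (lam : R), (0 < T)%N -> 0 < lam ->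
      let r := Num.sqrt (T%:R / (T.+1)%:R) in
      r ^+ 2 / lam ^+ 2 <= n%:R ->
      c1 * (1 / lam ^+ 2) <= (VCdim (Hclass (Ebar_WL R c0 rl n T) 1 lam))%:R
      /\ (VCdim (Hclass (Ebar_WL R c0 rl n T) 1 lam))%:R <= c2 * (1 + 1 / lam ^+ 2)).
Proof.
have c1_gt0 : 0 < 1 / 8 :> R by rewrite divr_gt0 ?ltr0n.
split; exists (1 / 8), 2; do 2 split => //.
- exact: VCdim_E_WL_bounds.
- exact: VCdim_Ebar_WL_bounds.
Qed.
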